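(* Let $\mathbf T$ be a countable homogeneous tournament and $\mathbf T^*$ an expansion of $\mathbf T$ as in the context. If $\mathrm{Age}(\mathbf T^* )$ has the expansion property relative to $\mathrm{Age}(\mathbf T)$, then for every positive integer $n$, $\mathrm{Age}(\mathbf T[I_n]^* )$ has the expansion property relative to $\mathrm{Age}(\mathbf T[I_n])$, where $\mathbf T[I_n]$ denotes the reduct of $\mathbf T[I_n]^*$ to the language $\{E\}$.
   Context: The age $\mathrm{Age}(\mathbf F)$ of a structure $\mathbf F$ is the class of finite structures embeddable in $\mathbf F$. Expansion property: let $L\subseteq L^*$ be relational languages, $\mathcal K$ a class of finite $L$-structures and $\mathcal K^*$ a class of finite $L^*$-structures whose $L$-reducts lie in $\mathcal K$. $\mathcal K^*$ has the expansion property relative to $\mathcal K$ if for every $\mathbf A\in\mathcal K$ there is $\mathbf B\in\mathcal K$ such that for all $\mathbf A^*,\mathbf B^*\in\mathcal K^*$ whose $L$-reducts are $\mathbf A$ and $\mathbf B$ respectively, $\mathbf A^*$ embeds into $\mathbf B^*$. A tournament is a directed graph in which every pair of distinct vertices carries exactly one directed edge; it is homogeneous if every isomorphism between finite substructures extends to an automorphism. $\mathbf T=(T,E^{\mathbf T})$ is a countable homogeneous tournament, and $\mathbf T^*$ is an expansion of $\mathbf T$ to a countable relational language $L_{\mathbf T^*}\supseteq\{E,<\}$ in which $<$ is interpreted as a linear order $<^*$ on $T$. For a positive integer $n$, $[n]=\{0,\dots,n-1\}$. The structure $\mathbf T[I_n]^*$ has universe $T\times[n]$ and language $L_{\mathbf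 T^*}\cup\{L_0,\dots,L_{n-1}\}$ ($L_i$ new unary symbols), interpreted as follows: $E((x,i),(y,j))$ iff $E^{\mathbf T}(x,y)$; for each $m$-ary $R\in L_{\mathbf T^*}\setminus\{E,<\}$, $R((x_1,i_1),\dots,(x_m,i_m))$ iff $R^{\mathbf T^*}(x_1,\dots,x_m)$; $(x,i)<(y,j)$ iff $x<^*y$, or $x=y$ and $i<j$; and $L_i(x,j)$ iff $j=i$. *)

From mathcomp Require Import all_boot.
Set Implicit Arguments. Unset Strict Implicit. Unset Printing Implicit Defensive.

Record lang := Lang { sym : Type; ar : sym -> nat }.

Definition structure (L : lang) (A : Type) :=
  forall s : sym L, ('I_(@ar L s) -> A) -> Prop.

Record lmorph (L Ls : lang) := LMorph {
  lmap : sym L -> sym Ls;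
  lmap_ar : forall s, @ar Ls (lmap s) = @ar L s }.

Definition reduct (L Ls : lang) (i : lmorph L Ls) (A : Type)
  (S : structure Ls A) : structure L A :=
  fun s t => S (lmap i s) (fun k => t (cast_ord (lmap_ar i s) k)).

Definition struct_eq (L : lang) (A : Type) (S1 S2 : structure L A) :=
  forall s t, S1 s t <-> S2 s t.

Definition embedding (L : lang) (A B : Type) (SA : structure L A)
  (SB : structure L B) (f : A -> B) :=
  injective f /\ forall s t, SA s t <-> SB s (fun k => f (t k)).

Definition fclass (L : lang) := forall A : finType, structure L A -> Prop.

Definition Age (L : lang) (C : Type) (F : structure L C) : fclass L :=
  fun A SA => exists f : A -> C, embedding SA F f.

Definition expansion_property (L Ls : lang) (i : lmorph L Ls)
  (Ks : fclass Ls) (K : fclass L) :=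
  forall (A : finType) (SA : structure L A), K A SA ->
  exists (B : finType) (SB : structure L B), K B SB /\
    forall (SAs : structure Ls A) (SBs : structure Ls B),
      Ks A SAs -> Ks B SBs ->
      struct_eq (reduct i SAs) SA -> struct_eq (reduct i SBs) SB ->
      exists f : A -> B, embedding SAs SBs f.

(* Homogeneity: every isomorphism between finite substructures (given by
   a finite domain s and a map g injective on s and preserving and
   reflecting all relations on s) extends to an automorphism. *)
Definition homogeneous (L : lang) (C : eqType) (S : structure L C) :=
  forall (s : seq C) (g : C -> C),
    {in s &, injective g} ->
    (forall r (t : 'I_(@ar L r) -> C), (forall k, t k \in s) ->
        (S r t <-> S r (fun k => g (t k)))) ->
    exists h : C -> C, bijective h /\ embedding S S h /\ {in s, h =1 g}.

Definition tournament (T : Type) (E : T -> T -> Prop) :=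
  (forall x, ~ E x x) /\
  (forall x y, x <> y -> (E x y \/ E y x) /\ ~ (E x y /\ E y x)).

Definition strict_linear_order (T : Type) (lt : T -> T -> Prop) :=
  (forall x, ~ lt x x) /\
  (forall x y z, lt x y -> lt y z -> lt x z) /\
  (forall x y, x <> y -> lt x y \/ lt y x).

Definition rel2 (A : Type) (R : A -> A -> Prop) (t : 'I_2 -> A) : Prop :=
  R (t ord0) (t ord_max).

Definition LE : lang := @Lang unit (fun _ => 2).

(* L_{T*} = {E, <} ∪ X : inl false = E, inl true = <, inr x = other symbols. *)
Definition LTs (X : Type) (arX : X -> nat) : lang :=
  @Lang (bool + X)%type (fun s => match s with inl _ => 2 | inr x => arX x end).

Definition LTn (X : Type) (arX : X -> nat) (n : nat) : lang :=
  @Lang (sym (LTs arX) + 'I_n)%type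
    (fun s => match s with inl s' => @ar (LTs arX) s' | inr _ => 1 end).

Definition iE_Ts (X : Type) (arX : X -> nat) : lmorph LE (LTs arX) :=
  @LMorph LE (LTs arX) (fun _ => inl false) (fun _ => erefl).

Definition iE_Tn (X : Type) (arX : X -> nat) (n : nat) : lmorph LE (LTn arX n) :=
  @LMorph LE (LTn arX n) (fun _ => inl (inl false)) (fun _ => erefl).

Definition TS (T : Type) (E : T -> T -> Prop) : structure LE T :=
  fun _ t => rel2 E t.

Definition TstarS (T X : Type) (arX : X -> nat) (E lt : T -> T -> Prop)
  (RX : forall x : X, ('I_(arX x) -> T) -> Prop) : structure (LTs arX) T :=
  fun s => match s return ('I_(@ar (LTs arX) s) -> T) -> Prop with
  | inl false => rel2 E
  | inl true => rel2 lt
  | inr x => RX x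
  end.

Definition TnStarS (T X : Type) (arX : X -> nat) (E lt : T -> T -> Prop)
  (RX : forall x : X, ('I_(arX x) -> T) -> Prop) (n : nat) :
  structure (LTn arX n) (T * 'I_n) :=
  fun s => match s return ('I_(@ar (LTn arX n) s) -> T * 'I_n) -> Prop with
  | inl (inl false) => rel2 (fun a b : T * 'I_n => E a.1 b.1)
  | inl (inl true) =>
      rel2 (fun a b : T * 'I_n => lt a.1 b.1 \/ (a.1 = b.1 /\ (a.2 < b.2)%N))
  | inl (inr x) => fun t => RX x (fun k => (t k).1)
  | inr i => fun t => (t ord0).2 = i
  end.

Arguments iE_Ts {X} arX.
Arguments iE_Tn {X} arX n.
Arguments TS {T} E.
Arguments TstarS {T X arX} E lt RX.
Arguments TnStarS {T X arX} E lt RX n.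
Arguments Age {L C} F.

(* Let A be a finite substructure of the tournament T[I_n], embedded by e.
   Its set A0 of first coordinates is a finite subtournament of T; the
   expansion property of Age(T* ) gives a witness B0 for A0, and we take
   B = B0 * [n], with edges read on first coordinates.  Given expansions
   A*, B* embedded in T[I_n]* by f and g:
   - since T is a tournament, the first coordinates of f factor injectively
     through A0 by an edge-preserving map h, so h pulls T* back to an
     expansion of A0 in Age(T* );
   - the first coordinates of g only depend on the B0-coordinate, through an
     injective map g0 pulling T* back to an expansion of B0, and g permutes
     each fibre {b} * [n];
   - the expansion property yields an embedding phi of the first expansion
     into the second; moving first coordinates by phi and correcting the
     labels by the fibre permutations gives the required embedding of A*
     into B*, because T[I_n]* only sees first coordinates through T*. *)

From mathcomp Require Import all_boot.
From Stdlib Require Import Setoid FunctionalExtensionality.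
Set Implicit Arguments. Unset Strict Implicit. Unset Printing Implicit Defensive.

Definition induced (L : lang) (A C : Type) (S : structure L C) (h : A -> C) :
  structure L A := fun s t => S s (fun k => h (t k)).

Lemma induced_Age (L : lang) (C : Type) (S : structure L C) (A : finType)
  (h : A -> C) : injective h -> Age S A (induced S h).
Proof. by move=> h_inj; exists h. Qed.

Lemma embedding_reduct (L Ls : lang) (i : lmorph L Ls) (A B : Type)
  (SA : structure Ls A) (SB : structure Ls B) (f : A -> B) :
  embedding SA SB f -> embedding (reduct i SA) (reduct i SB) f.
Proof. by move=> [f_inj hf]; split=> // s t; exact: hf. Qed.

Lemma embedding_struct_eq (L : lang) (A B : Type) (S1 S2 : structure L A)
  (S : structure L B) (f : A -> B) :
  struct_eq S1 S2 -> embedding S1 S f -> embedding S2 S f.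
Proof. by move=> e12 [f_inj hf]; split=> // s t; rewrite -e12. Qed.

Lemma embeddings_agree (L : lang) (A B : Type) (SA : structure L A)
  (SB : structure L B) (e f : A -> B) :
  embedding SA SB e -> embedding SA SB f ->
  struct_eq (induced SB e) (induced SB f).
Proof. by move=> [_ he] [_ hf] s t; rewrite /induced -he -hf. Qed.

(* In a tournament, equality is detected by the edge relation, so two maps
   inducing the same edges have the same kernel. *)
Lemma tournament_kernel (T : eqType) (E : T -> T -> Prop) (A : Type)
  (u v : A -> T) : tournament E ->
  (forall a a', E (u a) (u a') <-> E (v a) (v a')) ->
  forall a a', u a = u a' <-> v a = v a'.
Proof.
move=> [irr tot] uv.
have eqE (x y : T) : x = y <-> ~ E x y /\ ~ E y x.
  split=> [<-|[nxy nyx]]; first by split; apply: irr.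
  by case: (eqVneq x y) => // /eqP /tot [[]].
by move=> a a'; rewrite eqE eqE !uv.
Qed.

Section Image.
Variables (A : finType) (C : eqType) (u : A -> C).

Definition image_type := seq_sub (codom u).
Definition to_image (a : A) : image_type := SeqSub (codom_f u a).
Definition of_image (x : image_type) : A := iinv (valP x).

Lemma to_of_image (x : image_type) : to_image (of_image x) = x.
Proof. by apply: val_inj; rewrite /= f_iinv. Qed.

Lemma image_onto (x : image_type) : exists a, x = to_image a.
Proof. by exists (of_image x); rewrite to_of_image. Qed.

Definition image_factor (D : Type) (v : A -> D) (x : image_type) : D :=
  v (of_image x).

Lemma image_factorE (D : Type) (v : A -> D) :
  (forall a a', u a = u a' -> v a = v a') ->
  forall a, image_factor v (to_image a) = v a.
Proof. by move=> uv a; apply: uv; rewrite /= f_iinv. Qed.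

Lemma image_factor_inj (D : Type) (v : A -> D) :
  (forall a a', v a = v a' -> u a = u a') -> injective (image_factor v).
Proof.
move=> vu x y /vu eq_u.
by rewrite -(to_of_image x) -(to_of_image y); apply: val_inj.
Qed.

End Image.

Lemma cast_ordK (A : Type) (m : nat) (p : m = m) (t : 'I_m -> A) :
  (fun k => t (cast_ord p k)) = t.
Proof. by apply: functional_extensionality => k; congr t; apply: val_inj. Qed.

Lemma reduct_TsE (X : Type) (arX : X -> nat) (A : Type)
  (S : structure (LTs arX) A) (s : sym LE) (t : 'I_2 -> A) :
  reduct (iE_Ts arX) S (s := s) t <-> S (inl false) t.
Proof. by rewrite /reduct /= cast_ordK. Qed.

Lemma reduct_TnE (X : Type) (arX : X -> nat) (n : nat) (A : Type)
  (S : structure (LTn arX n) A) (s : sym LE) (t : 'I_2 -> A) :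
  reduct (iE_Tn arX n) S (s := s) t <-> S (inl (inl false)) t.
Proof. by rewrite /reduct /= cast_ordK. Qed.

Section BlowUp.
Variables (T : eqType) (E lt : T -> T -> Prop) (X : Type) (arX : X -> nat).
Variables (RX : forall x : X, ('I_(arX x) -> T) -> Prop) (n : nat).
Hypothesis E_tournament : tournament E.

Local Notation Tstar := (TstarS E lt RX).
Local Notation Tnstar := (TnStarS E lt RX n).
Local Notation TnE := (reduct (iE_Tn arX n) Tnstar).

Lemma fst_edges_agree (A : Type) (e f : A -> T * 'I_n) :
  struct_eq (induced TnE e) (induced TnE f) ->
  (forall a a', E (e a).1 (e a').1 <-> E (f a).1 (f a').1) /\
  (forall a a', (e a).1 = (e a').1 <-> (f a).1 = (f a').1).
Proof.
move=> ef; have edges a a' : E (e a).1 (e a').1 <-> E (f a).1 (f a').1.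
  pose t : 'I_2 -> A := fun k => if val k == 0 then a else a'.
  by have := ef tt t; rewrite /induced !reduct_TnE; apply.
split=> //.
exact: (tournament_kernel (u := fun a => (e a).1) (v := fun a => (f a).1)
          E_tournament edges).
Qed.

Lemma blowup_embedding (B0 : Type) (SB0 : structure LE B0) (e0 : B0 -> T) :
  embedding SB0 (TS E) e0 ->
  embedding (induced SB0 fst) TnE (fun p => (e0 p.1, p.2)).
Proof.
move=> [e0_inj he0]; split=> [[b i] [b' i'] /= [/e0_inj -> ->] //|[] t].
by rewrite reduct_TnE /induced he0.
Qed.

Lemma first_coordinates_relabel (A : finType) (SA : structure LE A)
  (e f : A -> T * 'I_n) : embedding SA TnE e -> embedding SA TnE f ->
  exists h : image_type (fun a => (e a).1) -> T,
    [/\ injective h,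
        struct_eq (reduct (iE_Ts arX) (induced Tstar h)) (induced (TS E) val)
      & forall a, (f a).1 = h (to_image _ a)].
Proof.
move=> he hf; have [edges kernel] := fst_edges_agree (embeddings_agree he hf).
have factorE := image_factorE (fun a a' => proj1 (kernel a a')).
exists (image_factor (u := fun a => (e a).1) (fun a => (f a).1)).
split=> [||a]; last by rewrite factorE.
  by apply: image_factor_inj => a a' /kernel.
move=> [] t; rewrite reduct_TsE /induced /TstarS /TS /rel2.
have [a ->] := image_onto (t ord0); have [a' ->] := image_onto (t ord_max).
by rewrite !factorE edges.
Qed.

Lemma slice_relabel (B0 : Type) (SB0 : structure LE B0) (e0 : B0 -> T)
  (g : B0 * 'I_n -> T * 'I_n) (i0 : 'I_n) :
  embedding SB0 (TS E) e0 -> embedding (induced SB0 fst) TnE g ->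
  exists g0 : B0 -> T,
    [/\ injective g0, struct_eq (reduct (iE_Ts arX) (induced Tstar g0)) SB0
      & forall p, (g p).1 = g0 p.1].
Proof.
move=> he0 hg; have [e0_inj _] := he0.
have [edges kernel] :=
  fst_edges_agree (embeddings_agree (blowup_embedding he0) hg).
exists (fun b => (g (b, i0)).1); split=> [b b' /kernel /e0_inj //||p].
  move=> [] t; rewrite reduct_TsE (proj2 he0) /induced /TstarS /TS /rel2.
  by rewrite -(edges (t ord0, i0) (t ord_max, i0)).
by apply/kernel.
Qed.

Lemma fibre_relabel (B0 : Type) (g : B0 * 'I_n -> T * 'I_n) (g0 : B0 -> T) :
  injective g -> (forall p, (g p).1 = g0 p.1) ->
  exists r : B0 -> 'I_n -> 'I_n, forall b j, g (b, r b j) = (g0 b, j).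
Proof.
move=> g_inj g_fst.
have label_inj b : injective (fun i => (g (b, i)).2).
  move=> i j eq_ij; suff [] : (b, i) = (b, j) by [].
  apply: g_inj; rewrite [g (b, i)]surjective_pairing.
  by rewrite [g (b, j)]surjective_pairing !g_fst eq_ij.
exists (fun b => finv (fun i => (g (b, i)).2)) => b j.
by rewrite [LHS]surjective_pairing g_fst (f_finv (label_inj b)).
Qed.

(* The T[I_n]*-structure of a tuple of pairs (x, i) depends only on the
   T*-structure of the first coordinates: relabelling them by a partial
   isomorphism of T* preserves it. *)
Lemma TnStar_relabel (A0 : Type) (h k : A0 -> T) :
  injective h -> injective k -> struct_eq (induced Tstar h) (induced Tstar k) ->
  forall s (u : 'I_(@ar (LTn arX n) s) -> A0) (w : 'I_(ar s) -> 'I_n),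
    Tnstar s (fun j => (h (u j), w j)) <-> Tnstar s (fun j => (k (u j), w j)).
Proof.
move=> h_inj k_inj hk [[[|]|x]|i] u w /=; last by [].
- have same_eq : h (u ord0) = h (u ord_max) <-> k (u ord0) = k (u ord_max).
    by split=> [/h_inj ->|/k_inj ->].
  by have := hk (inl true) u; rewrite /induced /TnStarS /TstarS /rel2 /=; tauto.
- exact: (hk (inl false) u).
- exact: (hk (inr x) u).
Qed.

Lemma embedding_relabel (A B A0 : Type) (SAs : structure (LTn arX n) A)
  (SBs : structure (LTn arX n) B) (f : A -> T * 'I_n) (g : B -> T * 'I_n)
  (x : A -> A0) (h k : A0 -> T) (psi : A -> B) :
  embedding SAs Tnstar f -> embedding SBs Tnstar g ->
  injective h -> injective k -> struct_eq (induced Tstar h) (induced Tstar k) ->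
  (forall a, (f a).1 = h (x a)) -> (forall a, g (psi a) = (k (x a), (f a).2)) ->
  embedding SAs SBs psi.
Proof.
move=> [f_inj hf] [g_inj hg] h_inj k_inj hk f_fst g_psi.
have f_pair a : f a = (h (x a), (f a).2) by rewrite -f_fst -surjective_pairing.
split=> [a a' /(congr1 g)|s t].
  rewrite !g_psi => -[/k_inj x_eq lab_eq]; apply: f_inj.
  by rewrite f_pair [f a']f_pair x_eq lab_eq.
rewrite hf hg (functional_extensionality _ _ (fun j => f_pair (t j))).
rewrite (functional_extensionality _ _ (fun j => g_psi (t j))).
exact: TnStar_relabel.
Qed.

End BlowUp.

Theorem theorem4p3 (T : countType) (E : T -> T -> Prop)
  (X : countType) (arX : X -> nat) (lt : T -> T -> Prop)
  (RX : forall x : X, ('I_(arX x) -> T) -> Prop) :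
  tournament E ->
  homogeneous (TS E) ->
  strict_linear_order lt ->
  expansion_property (iE_Ts arX) (Age (TstarS E lt RX)) (Age (TS E)) ->
  forall n : nat, (0 < n)%N ->
    expansion_property (iE_Tn arX n) (Age (TnStarS E lt RX n))
      (Age (reduct (iE_Tn arX n) (TnStarS E lt RX n))).
Proof.
move=> hT _ _ hEP n n_gt0 A SA [e he].
(* B0 witnesses the expansion property of T* for the set A0 of first
   coordinates of A; its blow-up B0 * [n] witnesses it for A. *)
pose A0 := image_type (fun a => (e a).1).
have [B0 [SB0 [[e0 he0] hEP_A0]]] :=
  hEP A0 _ (induced_Age (TS E) (val_inj : injective (val : A0 -> T))).
exists (B0 * 'I_n)%type, (induced SB0 fst).
split=> [|SAs SBs [f hf] [g hg] redA redB].
  by exists (fun p => (e0 p.1, p.2)); exact: blowup_embedding.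
have hfA := embedding_struct_eq redA (embedding_reduct (iE_Tn arX n) hf).
have hgB := embedding_struct_eq redB (embedding_reduct (iE_Tn arX n) hg).
have [h [h_inj redA0 f_fst]] := first_coordinates_relabel hT he hfA.
have [g0 [g0_inj redB0 g_fst]] := slice_relabel hT (Ordinal n_gt0) he0 hgB.
have [phi [phi_inj hphi]] :=
  hEP_A0 _ _ (induced_Age _ h_inj) (induced_Age _ g0_inj) redA0 redB0.
have [r hr] := fibre_relabel (proj1 hg) g_fst.
pose psi a := let b := phi (to_image _ a) in (b, r b (f a).2).
exists psi; apply: (embedding_relabel (k := g0 \o phi) hf hg h_inj _ _ f_fst).
- by move=> b b' /g0_inj /phi_inj.
- exact: hphi.
- by move=> a; rewrite hr.
Qed.
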